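(* Let $f,g\in\mathbb{C}[X]$ with $\deg f=n\ge 1$ and $g\mid f$, $g\neq 0$. Then $\Phi(g):=f g'/g=\sum_{i=0}^{n-1}a_iX^i\in\mathbb{C}[X]$ and for every $0\le i\le n-1$, $$|a_i|\le B_i:=\binom{n-1}{i}\,n\,M(f).$$
   Context: For $h\in\mathbb{C}[X]$ with leading coefficient $\ell_h$, the Mahler measure is $M(h)=|\ell_h|\prod_{|\alpha|>1}|\alpha|^{m_\alpha}$, the product over the complex roots $\alpha$ of $h$ with $|\alpha|>1$, $m_\alpha$ the multiplicity of $\alpha$. *)

From mathcomp Require Import all_boot all_order all_algebra.
Set Implicit Arguments. Unset Strict Implicit. Unset Printing Implicit Defensive.
Import Order.TTheory GRing.Theory Num.Theory.
Local Open Scope ring_scope.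

(* Complex numbers are modelled by an arbitrary numClosedFieldType C
   (algebraically closed field with a norm, e.g. the complex numbers). *)

Definition roots_seq (C : numClosedFieldType) (p : {poly C}) : seq C :=
  sval (closed_field_poly_normal p).

Lemma roots_seqP (C : numClosedFieldType) (p : {poly C}) :
  p = lead_coef p *: \prod_(z <- roots_seq p) ('X - z%:P).
Proof. exact: (svalP (closed_field_poly_normal p)). Qed.

Definition mahler (C : numClosedFieldType) (p : {poly C}) : C :=
  `|lead_coef p| * \prod_(z <- roots_seq p | 1 < `|z|) `|z|.

From mathcomp Require Import all_boot all_order all_algebra.
Set Implicit Arguments. Unset Strict Implicit. Unset Printing Implicit Defensive.
Import Order.TTheory GRing.Theory Num.Theory.
Local Open Scope ring_scope.

(* Write [h = f / g], so that [Phi = h g'].  Factoring [h] and [g] over their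
   roots [s] and [t], [Phi] is [lead_coef f] times the sum, over [x] in [t], of
   the monic polynomials with roots [s ++ t \ x], all of degree [n - 1] and with
   roots among those of [f].  The [i]-th coefficient of a monic polynomial with
   roots [z_1, ..., z_m] is bounded by [binomial m i * prod_j max(1, |z_j|)],
   and dropping a root does not increase this product. *)

Section DerivProd.
Variable R : comNzRingType.

Lemma deriv_prod_XsubC (s : seq R) :
  (\prod_(z <- s) ('X - z%:P))^`() =
  \sum_(x <- s) \prod_(z <- rem x s) ('X - z%:P).
Proof.
elim: s => [|a s IHs]; first by rewrite !big_nil derivC.
rewrite big_cons derivM derivXsubC mul1r IHs mulr_sumr big_cons /= eqxx.
congr (_ + _); rewrite !big_seq; apply: eq_bigr => x xs /=.
case: eqP => [->|_]; last by rewrite big_cons.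
by rewrite (perm_big _ (perm_to_rem xs)) big_cons.
Qed.

End DerivProd.

Section MahlerBound.
Variable R : numDomainType.

Definition max1_norm (z : R) : R := if 1 < `|z| then `|z| else 1.

Definition mahler_roots (s : seq R) : R := \prod_(z <- s) max1_norm z.

Lemma max1_norm_ge1 z : 1 <= max1_norm z.
Proof. by rewrite /max1_norm; case: ifP => // /ltW. Qed.

Lemma norm_le_max1_norm z : `|z| <= max1_norm z.
Proof.
rewrite /max1_norm; case: ifP => // /negbT.
by rewrite -real_leNgt ?realE ?normr_ge0 ?ler01.
Qed.

Lemma mahler_roots_cons a s :
  mahler_roots (a :: s) = max1_norm a * mahler_roots s.
Proof. exact: big_cons. Qed.

Lemma mahler_roots_cat s t :
  mahler_roots (s ++ t) = mahler_roots s * mahler_roots t.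
Proof. exact: big_cat. Qed.

Lemma perm_mahler_roots s t : perm_eq s t -> mahler_roots s = mahler_roots t.
Proof. exact: perm_big. Qed.

Lemma mahler_roots_ge0 s : 0 <= mahler_roots s.
Proof. by apply: prodr_ge0 => z _; apply: le_trans (max1_norm_ge1 z). Qed.

Lemma mahler_roots_rem s x : mahler_roots (rem x s) <= mahler_roots s.
Proof.
have [xs|/rem_id-> //] := boolP (x \in s).
rewrite [leRHS](perm_mahler_roots (perm_to_rem xs)) mahler_roots_cons.
exact: ler_peMl (mahler_roots_ge0 _) (max1_norm_ge1 x).
Qed.

Lemma norm_coef_prod_XsubC (s : seq R) i :
  `|(\prod_(z <- s) ('X - z%:P))`_i| <= 'C(size s, i)%:R * mahler_roots s.
Proof.
elim: s i => [|a s IHs] [|i].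
- by rewrite /mahler_roots !big_nil coef1 normr1 bin0 mulr1.
- by rewrite big_nil coef1 normr0 mulr_ge0 ?ler0n ?mahler_roots_ge0.
- rewrite big_cons mulrBl coefB coefXM coefCM sub0r normrN normrM !bin0 !mul1r.
  rewrite mahler_roots_cons.
  have := IHs 0%N; rewrite bin0 mul1r.
  exact: ler_pM (normr_ge0 _) (normr_ge0 _) (norm_le_max1_norm a).
rewrite big_cons mulrBl coefB coefXM coefCM /= mahler_roots_cons.
rewrite binS natrD mulrDl [leRHS]addrC; apply: le_trans (ler_normD _ _) _.
apply: lerD; rewrite mulrCA.
  apply: le_trans (IHs i) _; apply: ler_peMl (max1_norm_ge1 a).
  by rewrite mulr_ge0 ?ler0n ?mahler_roots_ge0.
rewrite normrN normrM.
exact: ler_pM (normr_ge0 _) (normr_ge0 _) (norm_le_max1_norm a) (IHs _).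
Qed.

Lemma norm_coef_mul_deriv_prod_XsubC (s t : seq R) i :
  `|(\prod_(z <- s) ('X - z%:P) * (\prod_(z <- t) ('X - z%:P))^`())`_i|
    <= ('C((size s + size t).-1, i) * size t)%:R * mahler_roots (s ++ t).
Proof.
rewrite deriv_prod_XsubC mulr_sumr coef_sum.
apply: le_trans (ler_norm_sum _ _ _) _.
have -> : ('C((size s + size t).-1, i) * size t)%:R * mahler_roots (s ++ t)
    = \sum_(x <- t) 'C((size s + size t).-1, i)%:R * mahler_roots (s ++ t).
  by rewrite big_const_seq count_predT iter_addr_0 natrM mulrAC mulr_natr.
rewrite [leLHS]big_seq [leRHS]big_seq; apply: ler_sum => x xt.
rewrite -big_cat; apply: le_trans (norm_coef_prod_XsubC _ _) _.
have sizetE : size t = (size t).-1.+1 by case: (t) xt.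
rewrite size_cat size_rem // {2}sizetE addnS /=.
apply: ler_wpM2l; first exact: ler0n.
rewrite !mahler_roots_cat; apply: ler_wpM2l (mahler_roots_rem t x).
exact: mahler_roots_ge0.
Qed.

End MahlerBound.

Section RootsSeq.
Variable C : numClosedFieldType.

Lemma mahlerE (p : {poly C}) :
  mahler p = `|lead_coef p| * mahler_roots (roots_seq p).
Proof.
rewrite /mahler /mahler_roots big_mkcond /=.
by congr (_ * _); apply: eq_bigr => z _; rewrite /max1_norm.
Qed.

Lemma size_roots_seq (p : {poly C}) : p != 0 -> size (roots_seq p) = (size p).-1.
Proof.
move=> p0; rewrite [in RHS](roots_seqP p) size_scale ?lead_coef_eq0 //.
by rewrite size_prod_XsubC.
Qed.

Lemma perm_roots_seq_mul (p q : {poly C}) : p * q != 0 ->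
  perm_eq (roots_seq (p * q)) (roots_seq p ++ roots_seq q).
Proof.
move=> pq0; have lc0 : lead_coef (p * q) != 0 by rewrite lead_coef_eq0.
apply: prod_XsubC_eq; apply: (scalerI lc0).
by rewrite -roots_seqP big_cat lead_coefM -scalerA scalerAr scalerAl -!roots_seqP.
Qed.

End RootsSeq.

Theorem lemma4p1 (C : numClosedFieldType) (f g : {poly C}) (n : nat) :
  size f = n.+1 -> (1 <= n)%N -> g != 0 -> g %| f ->
  let Phi := (f * g^`()) %/ g in
  [/\ Phi * g = f * g^`(),
      (size Phi <= n)%N &
      forall i : nat, (i < n)%N ->
        `|Phi`_i| <= ('C(n.-1, i) * n)%:R * mahler f].
Proof.
move=> sizef n_gt0 g0 dvd_gf Phi; set h := f %/ g.
have fE : f = h * g by rewrite divpK.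
have PhiE : Phi = h * g^`() by rewrite divp_mulAC.
have f0 : f != 0 by rewrite -size_poly_eq0 sizef.
set s := roots_seq h; set t := roots_seq g.
have roots_f : perm_eq (roots_seq f) (s ++ t).
  by rewrite fE; apply: perm_roots_seq_mul; rewrite -fE.
have size_st : (size s + size t = n)%N.
  by rewrite -size_cat -(perm_size roots_f) size_roots_seq // sizef.
have coef_bound i : `|Phi`_i| <= ('C(n.-1, i) * n)%:R * mahler f.
  rewrite PhiE [h]roots_seqP [g]roots_seqP derivZ -scalerAr -scalerAl scalerA.
  rewrite coefZ mahlerE (perm_mahler_roots roots_f) fE lead_coefM.
  rewrite (mulrC (lead_coef h)) normrM mulrCA.
  apply: ler_wpM2l; first exact: normr_ge0.
  apply: le_trans (norm_coef_mul_deriv_prod_XsubC _ _ _) _.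
  rewrite size_st; apply: ler_wpM2r; first exact: mahler_roots_ge0.
  by rewrite ler_nat leq_mul2l -size_st leq_addl orbT.
split=> [||i _]; [by rewrite PhiE fE mulrAC | | exact: coef_bound].
apply/leq_sizeP => j n_le_j; apply/eqP; rewrite -normr_eq0 eq_le normr_ge0 andbT.
by apply: le_trans (coef_bound j) _; rewrite bin_small ?mul0r // prednK.
Qed.
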